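(* Let $P$ be a finite poset that has a unit mixed interval representation. Then $\dim(P) \le 3$.
   Context: Posets are finite and reflexive. A unit mixed interval representation of $P$ assigns to each element $x$ a real interval $I_x$ of length $1$ of one of the four forms $[a,a+1]$, $(a,a+1)$, $(a,a+1]$, $[a,a+1)$ (different forms may occur for different elements), such that for distinct $x,y$, $x<y$ in $P$ if and only if $I_x$ and $I_y$ are disjoint and every point of $I_x$ is less than every point of $I_y$. The dimension $\dim(P)$ is the minimum number of linear extensions of $P$ whose intersection is $P$ (i.e. $x<y$ in $P$ iff $x<y$ in each of them). *)

From mathcomp Require Import all_boot.
From Stdlib Require Import Reals.

Set Implicit Arguments.
Unset Strict Implicit.
Unset Printing Implicit Defensive.

Definition is_poset (T : finType) (le : rel T) : Prop :=
  reflexive le /\ antisymmetric le /\ transitive le.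

Definition lt_of (T : finType) (le : rel T) : rel T :=
  fun x y => (x != y) && le x y.

(* A unit interval of one of the four forms [a,a+1], (a,a+1), (a,a+1], [a,a+1):
   left endpoint a, and whether each end is closed. *)
Record unit_interval := UnitInterval {
  ui_left : R;
  ui_lclosed : bool;
  ui_rclosed : bool }.

Definition in_ui (I : unit_interval) (t : R) : Prop :=
  (if ui_lclosed I then (ui_left I <= t)%R else (ui_left I < t)%R) /\
  (if ui_rclosed I then (t <= ui_left I + 1)%R else (t < ui_left I + 1)%R).

Definition ui_before (I J : unit_interval) : Prop :=
  (forall t, in_ui I t -> in_ui J t -> False) /\
  (forall s t, in_ui I s -> in_ui J t -> (s < t)%R).

Definition unit_mixed_rep (T : finType) (le : rel T) (f : T -> unit_interval) : Prop :=
  forall x y : T, x <> y -> (lt_of le x y <-> ui_before (f x) (f y)).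

Definition has_unit_mixed_rep (T : finType) (le : rel T) : Prop :=
  exists f : T -> unit_interval, unit_mixed_rep le f.

Definition linear_extension (T : finType) (le L : rel T) : Prop :=
  is_poset L /\ total L /\ (forall x y, le x y -> L x y).

Definition dim_le (T : finType) (le : rel T) (k : nat) : Prop :=
  exists m : nat, exists L : 'I_m -> rel T,
    m <= k /\ (forall i, linear_extension le (L i)) /\
    (forall x y : T, lt_of le x y <-> (forall i, lt_of (L i) x y)).

(* Cut the real line into the unit blocks [k-1, k), k : Z; the
   [block] of an interval is the k whose block contains its left endpoint a,
   and its [gap] is k - a, in (0, 1].  If I lies before J then
   block I < block J, and conversely two intervals whose blocks differ by at
   least 2 are always ordered.  So an incomparable pair lies either in one
   block or in two adjacent blocks, where the order is decided by the gaps
   (and, for equal gaps, by whether the touching endpoints are closed).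
   Three linear extensions then suffice:
   - [block_key]: sort by block, and inside a block by increasing gap;
   - [pair_key 0], [pair_key 1]: group the blocks in consecutive pairs
     {2j+p, 2j+p+1} (p = 0, 1), sort by pair, and inside a pair by
     decreasing gap, with a tie-break reversing the one of [block_key].
   Each extension is the pull-back of the lexicographic order on real lists
   along an injective key. *)

From mathcomp Require Import all_boot.
From Stdlib Require Import Reals Lra Lia ZArith.

Set Implicit Arguments.
Unset Strict Implicit.
Unset Printing Implicit Defensive.

Definition rlt (u v : R) : bool := if Rlt_dec u v then true else false.
Definition req (u v : R) : bool := if Req_EM_T u v then true else false.

Lemma rltP u v : reflect (u < v)%R (rlt u v).
Proof. by rewrite /rlt; case: Rlt_dec => ?; constructor. Qed.

Lemma reqP u v : reflect (u = v) (req u v).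
Proof. by rewrite /req; case: Req_EM_T => ?; constructor. Qed.

Fixpoint lexlt (s t : seq R) : bool :=
  match s, t with
  | u :: s', v :: t' => rlt u v || (req u v && lexlt s' t')
  | _, _ => false
  end.

Lemma lexlt_cons u v s t :
  lexlt (u :: s) (v :: t) <-> (u < v \/ (u = v /\ lexlt s t))%R.
Proof.
rewrite /=; split.
- by case/orP=> [/rltP|/andP[/reqP ? ?]]; [left|right].
- case=> [/rltP ->//|[/reqP -> ->]]; exact: orbT.
Qed.

Lemma lexlt_irr s : lexlt s s = false.
Proof.
elim: s => [|u s IH] //; apply/negP => /lexlt_cons[|[_]]; [lra|by rewrite IH].
Qed.

Lemma lexlt_trans {s t u} : lexlt s t -> lexlt t u -> lexlt s u.
Proof.
elim: s t u => [|a s IH] [|b t] [|c u] //.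
move=> /lexlt_cons Hst /lexlt_cons Htu; apply/lexlt_cons.
case: Hst Htu => [Hab|[<- Hst]] [Hbc|[<- Htu]]; try (left; lra).
by right; split; last exact: IH Hst Htu.
Qed.

Lemma lexlt_asym {s t} : lexlt s t -> lexlt t s -> False.
Proof. by move=> Hst /(lexlt_trans Hst); rewrite lexlt_irr. Qed.

Lemma lexlt_total {s t} : size s = size t -> s <> t -> lexlt s t \/ lexlt t s.
Proof.
elim: s t => [|a s IH] [|b t] //= [] Hsz Hne.
rewrite !lexlt_cons; case: (Rtotal_order a b) => [H|[E|H]].
- by left; left.
- subst b; have Hst : s <> t by move=> E; apply: Hne; rewrite E.
  by case: (IH t Hsz Hst) => H; [left|right]; right; split.
- by right; left.
Qed.

Lemma lexlt_opp s t : lexlt (map Ropp s) (map Ropp t) = lexlt t s.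
Proof.
elim: s t => [|a s IH] [|b t] //=; rewrite IH.
congr (_ || (_ && _)).
- by apply/rltP/rltP; lra.
- by apply/reqP/reqP; lra.
Qed.

Section Realizer.
Variables (T : finType) (le : rel T).

Definition key_order (k : T -> seq R) : rel T :=
  fun x y => (x == y) || lexlt (k x) (k y).

Lemma lt_key_order k x y : lt_of (key_order k) x y = lexlt (k x) (k y).
Proof. by rewrite /lt_of /key_order; case: eqP => [->|] /=; rewrite ?lexlt_irr. Qed.

Lemma key_order_linear n (k : T -> seq R) :
  (forall x, size (k x) = n) -> injective k ->
  (forall x y, lt_of le x y -> lexlt (k x) (k y)) ->
  linear_extension le (key_order k).
Proof.
move=> k_size k_inj k_mono; split; [split; [|split]|split].
- by move=> x; rewrite /key_order eqxx.
- move=> x y /andP[]; rewrite /key_order.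
  case: eqP => [//|_] /= Hxy; case: eqP => [->//|_] /= Hyx.
  by case: (lexlt_asym Hxy Hyx).
- move=> y x z; rewrite /key_order.
  case: eqP => [->//|_] /= Hxy; case: eqP => [<-|_] /= Hyz; first by rewrite Hxy orbT.
  by rewrite (lexlt_trans Hxy Hyz) orbT.
- move=> x y; rewrite /key_order; have [->|Hne] := eqVneq x y; rewrite ?eqxx //=.
  have Hsz : size (k x) = size (k y) by rewrite !k_size.
  have Hk : k x <> k y by move/k_inj/eqP; rewrite (negbTE Hne).
  by case: (lexlt_total Hsz Hk) => ->; rewrite ?orbT.
- move=> x y Hle; rewrite /key_order; case: eqP => //= /eqP Hne.
  by apply: k_mono; rewrite /lt_of Hne.
Qed.

Lemma dim_le_of_keys m n (k : 'I_m.+1 -> T -> seq R) :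
  (forall i x, size (k i x) = n) -> (forall i, injective (k i)) ->
  (forall i x y, lt_of le x y -> lexlt (k i x) (k i y)) ->
  (forall x y, x != y -> ~~ lt_of le x y -> exists i, lexlt (k i y) (k i x)) ->
  dim_le le m.+1.
Proof.
move=> k_size k_inj k_mono k_sep.
exists m.+1, (fun i => key_order (k i)); split=> //; split.
  by move=> i; exact: key_order_linear (k_size i) (k_inj i) (k_mono i).
move=> x y; split=> [Hxy i|Hall]; first by rewrite lt_key_order k_mono.
have Hne : x != y.
  by apply/eqP=> Exy; have := Hall ord0; rewrite lt_key_order Exy lexlt_irr.
apply/negPn/negP => /(k_sep x y Hne) [i Hyx].
by have := Hall i; rewrite lt_key_order => /lexlt_asym; apply.
Qed.
End Realizer.

Section UnitIntervals.
Local Open Scope R_scope.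
Implicit Types I J : unit_interval.

Lemma in_ui_interior I t : ui_left I < t < ui_left I + 1 -> in_ui I t.
Proof. by rewrite /in_ui; case: ui_lclosed; case: ui_rclosed => /=; lra. Qed.

Lemma ui_beforeE I J : ui_before I J <->
  ui_left I + 1 < ui_left J \/
  (ui_left I + 1 = ui_left J /\ ~~ (ui_rclosed I && ui_lclosed J)).
Proof.
split=> [[_ Hlt]|Hsep].
- case: (Rtotal_order (ui_left I + 1) (ui_left J)) => [|[Heq|Hgt]]; first by left.
  + right; split=> //; apply/negP=> /andP[Hr Hl].
    have HI : in_ui I (ui_left I + 1).
      by rewrite /in_ui Hr; case: ui_lclosed; split; lra.
    have HJ : in_ui J (ui_left I + 1).
      by rewrite /in_ui Hl; case: ui_rclosed; split; lra.
    by have := Hlt _ _ HI HJ; lra.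
  + exfalso; case: (Rle_or_lt (ui_left J) (ui_left I)) => HJI.
    * have HI : in_ui I (ui_left I + /2) by apply: in_ui_interior; lra.
      have HJ : in_ui J (ui_left J + /2) by apply: in_ui_interior; lra.
      by have := Hlt _ _ HI HJ; lra.
    * pose m := (ui_left J + ui_left I + 1) / 2.
      have HI : in_ui I m by apply: in_ui_interior; rewrite /m; lra.
      have HJ : in_ui J m by apply: in_ui_interior; rewrite /m; lra.
      by have := Hlt _ _ HI HJ; lra.
- have Hlt s t : in_ui I s -> in_ui J t -> s < t.
    rewrite /in_ui; case: Hsep => [|[Heq]];
      case: ui_lclosed; case: ui_rclosed; case: ui_lclosed; case: ui_rclosed;
      move=> //=; lra.
  by split=> // t HI HJ; have := Hlt t t HI HJ; lra.
Qed.

(* The left endpoint of I lies in the unit block [block I - 1, block I),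
   at distance [gap I] from its right end. *)
Definition block I : Z := up (ui_left I).
Definition gap I : R := IZR (block I) - ui_left I.

Lemma gap_bounds I : 0 < gap I <= 1.
Proof. by rewrite /gap /block; have := archimed (ui_left I); lra. Qed.

Lemma before_block {I J} : ui_before I J -> (block I < block J)%Z.
Proof.
move/ui_beforeE=> Hsep; apply: lt_IZR.
have := gap_bounds I; have := gap_bounds J; rewrite /gap; case: Hsep; lra.
Qed.

Lemma not_before_block {I J} : ~ ui_before I J -> (block J <= block I + 1)%Z.
Proof.
move=> Hn; suff : (block J < block I + 2)%Z by lia.
apply: lt_IZR; rewrite plus_IZR.
have := gap_bounds I; have := gap_bounds J; rewrite /gap => HJ HI.
case: (Rle_or_lt (ui_left J) (ui_left I + 1)) => Hle; first lra.
by case: Hn; apply/ui_beforeE; left.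
Qed.

Lemma ui_before_adjacent {I J} : block J = (block I + 1)%Z ->
  ui_before I J <->
  gap J < gap I \/ (gap J = gap I /\ ~~ (ui_rclosed I && ui_lclosed J)).
Proof.
move=> Hadj; have Hleft : ui_left J = ui_left I + 1 + gap I - gap J.
  by rewrite /gap Hadj plus_IZR; lra.
rewrite ui_beforeE Hleft.
by split; case=> [|[? ?]]; (left; lra) || (right; split=> //; lra).
Qed.
End UnitIntervals.

Section Keys.
Local Open Scope R_scope.
Variables (T : finType) (f : T -> unit_interval).

(* Blocks are grouped in pairs {2j+p, 2j+p+1}: [pair_index p x] is the pair
   j of the block of x, and [lower_in_pair p x] tells whether x is in its
   lower block 2j+p. *)
Definition pair_index (p : Z) (x : T) : Z := ((block (f x) - p) / 2)%Z.
Definition lower_in_pair (p : Z) (x : T) : bool := ((block (f x) - p) mod 2 =? 0)%Z.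

Lemma pair_index_step p {x y} : (block (f x) < block (f y))%Z ->
  (pair_index p x < pair_index p y)%Z \/
  [/\ pair_index p x = pair_index p y, block (f y) = (block (f x) + 1)%Z,
      lower_in_pair p x & ~~ lower_in_pair p y].
Proof.
rewrite /pair_index /lower_in_pair => Hxy.
have [Hlt|Heq] : ((block (f x) - p) / 2 < (block (f y) - p) / 2 \/
                  (block (f x) - p) / 2 = (block (f y) - p) / 2)%Z.
- by Z.div_mod_to_equations; lia.
- by left.
right; split=> //; [|apply/Z.eqb_spec|apply/negP => /Z.eqb_spec];
  Z.div_mod_to_equations; lia.
Qed.

Lemma pair_index_adjacent {p x y} :
  block (f y) = (block (f x) + 1)%Z -> lower_in_pair p x ->
  pair_index p x = pair_index p y /\ ~~ lower_in_pair p y.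
Proof.
rewrite /pair_index /lower_in_pair => Hadj /Z.eqb_spec Hx; rewrite Hadj.
split; last apply/negP => /Z.eqb_spec; Z.div_mod_to_equations; lia.
Qed.

(* Tie-break among elements of one pair with equal gaps: lower block with
   open right end, upper block with closed left end, lower block with
   closed right end, upper block with open left end. *)
Definition pair_slot (p : Z) (x : T) : R :=
  if lower_in_pair p x then (if ui_rclosed (f x) then 2 else 0)
  else (if ui_lclosed (f x) then 1 else 3).

Lemma pair_slot_cross {p x y} : lower_in_pair p x -> ~~ lower_in_pair p y ->
  if ui_rclosed (f x) && ui_lclosed (f y) then pair_slot p y < pair_slot p x
  else pair_slot p x < pair_slot p y.
Proof.
rewrite /pair_slot => -> /negbTE ->.
by case: ui_rclosed; case: ui_lclosed => /=; lra.
Qed.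

(* Final tie-break making every key injective. *)
Definition tiebreak (x : T) : R := INR (enum_rank x).

Definition pair_tail (p : Z) (x : T) : seq R :=
  [:: - gap (f x); pair_slot p x; tiebreak x].

Definition pair_key (p : Z) (x : T) : seq R := IZR (pair_index p x) :: pair_tail p x.

(* Inside a block, [block_key] reverses the order given by [pair_key 0]. *)
Definition block_key (x : T) : seq R := IZR (block (f x)) :: map Ropp (pair_tail 0 x).

Lemma tiebreak_inj : injective tiebreak.
Proof. by move=> x y /INR_eq /ord_inj /enum_rank_inj. Qed.

Lemma pair_key_inj p : injective (pair_key p).
Proof. by move=> x y [_ _ _] /tiebreak_inj. Qed.

Lemma block_key_inj : injective block_key.
Proof. by move=> x y [_ _ _ Hxy]; apply: tiebreak_inj; lra. Qed.

Lemma pair_key_monotone p x y :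
  ui_before (f x) (f y) -> lexlt (pair_key p x) (pair_key p y).
Proof.
move=> Hxy; rewrite /pair_key lexlt_cons.
case: (pair_index_step p (before_block Hxy)) => [Hlt|[Heq Hadj Lx Ly]].
  by left; apply: IZR_lt.
right; split; first by rewrite Heq.
rewrite /pair_tail !lexlt_cons.
case/(ui_before_adjacent Hadj): Hxy => [Hgap|[Hgap Hcl]]; first by left; lra.
right; split; first by rewrite Hgap.
by left; move: (pair_slot_cross Lx Ly); rewrite (negbTE Hcl).
Qed.

Lemma block_key_monotone x y :
  ui_before (f x) (f y) -> lexlt (block_key x) (block_key y).
Proof. by move/before_block=> Hlt; rewrite /block_key lexlt_cons; left; apply: IZR_lt. Qed.

Lemma pair_key_reverses p x y :
  block (f y) = (block (f x) + 1)%Z -> lower_in_pair p x ->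
  ~ ui_before (f x) (f y) -> lexlt (pair_key p y) (pair_key p x).
Proof.
move=> Hadj Lx; rewrite (ui_before_adjacent Hadj) => Hn.
have [Heq Ly] := pair_index_adjacent Hadj Lx.
rewrite /pair_key /pair_tail !lexlt_cons; right; split; first by rewrite Heq.
case: (Rtotal_order (gap (f x)) (gap (f y))) => [Hlt|[Hgap|Hgt]].
- by left; lra.
- right; split; first by rewrite Hgap.
  left; move: (pair_slot_cross Lx Ly); case: ifP => // Hcl.
  by case: Hn; right; rewrite Hcl.
- by case: Hn; left.
Qed.

Lemma same_block_separate {x y} : x != y -> block (f x) = block (f y) ->
  lexlt (pair_key 0 y) (pair_key 0 x) \/ lexlt (block_key y) (block_key x).
Proof.
move=> Hne Hblk; have Hidx : pair_index 0 x = pair_index 0 y by rewrite /pair_index Hblk.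
have Htail : pair_tail 0 x <> pair_tail 0 y.
  by move=> E; move/eqP: Hne; apply; apply: (@pair_key_inj 0%Z); rewrite /pair_key Hidx E.
have Hsize : size (pair_tail 0 x) = size (pair_tail 0 y) by [].
case: (lexlt_total Hsize Htail) => Hxy.
- by right; rewrite /block_key lexlt_cons lexlt_opp; right; rewrite Hblk.
- by left; rewrite /pair_key lexlt_cons; right; rewrite Hidx.
Qed.

Lemma keys_separate x y : x != y -> ~ ui_before (f x) (f y) ->
  [\/ lexlt (pair_key 0 y) (pair_key 0 x), lexlt (pair_key 1 y) (pair_key 1 x)
     | lexlt (block_key y) (block_key x)].
Proof.
move=> Hne Hn; case: (Z.lt_total (block (f x)) (block (f y))) => [Hlt|[Heq|Hgt]].
- have Hadj : block (f y) = (block (f x) + 1)%Z by have := not_before_block Hn; lia.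
  have : lower_in_pair 0 x || lower_in_pair 1 x.
    by rewrite /lower_in_pair; case: Z.eqb_spec => //= ?; apply/Z.eqb_spec;
       Z.div_mod_to_equations; lia.
  by case/orP=> Lx; [apply: Or31|apply: Or32]; exact: pair_key_reverses.
- by case: (same_block_separate Hne Heq); [apply: Or31|apply: Or33].
- by apply: Or33; rewrite /block_key lexlt_cons; left; apply: IZR_lt.
Qed.
End Keys.

Theorem mainTheorem4 (T : finType) (le : rel T) :
  is_poset le -> has_unit_mixed_rep le -> dim_le le 3.
Proof.
move=> _ [f rep].
have before_of_lt x y : lt_of le x y -> ui_before (f x) (f y).
  by move=> Hlt; apply/(rep x y); [apply/eqP; case/andP: Hlt|].
pose key (i : 'I_3) : T -> seq R :=
  match val i with 0 => pair_key f 0 | 1 => pair_key f 1 | _ => block_key f end.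
apply: (@dim_le_of_keys _ _ 2 4 key).
- by case=> [[|[|?]] ?].
- case=> [[|[|?]] ?]; [exact: pair_key_inj|exact: pair_key_inj|exact: block_key_inj].
- move=> [[|[|?]] ?] x y /before_of_lt Hxy;
    [exact: pair_key_monotone|exact: pair_key_monotone|exact: block_key_monotone].
- move=> x y Hne Hnlt; have Hn : ~ ui_before (f x) (f y).
    by move/(rep x y (elimN eqP Hne)); apply/negP: Hnlt.
  case: (keys_separate Hne Hn) => Hyx.
  + by exists ord0.
  + by exists (Ordinal (isT : 1 < 3)).
  + by exists ord_max.
Qed.
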